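(* Let $(\beta_{\rm sd},\beta_{\rm rd},\beta_{\rm sr})\in\mathbb{R}_+^3$ with $\beta_{\rm rd}>0$, and set $S=\mathsf{SNR}^{\beta_{\rm sd}}$, $I=\mathsf{SNR}^{\beta_{\rm rd}}$, $C=\mathsf{SNR}^{\beta_{\rm sr}}$. Then $$\liminf_{\mathsf{SNR}\to\infty}\frac{r^{\rm(LDA\text{-}HD)}}{\log(1+\mathsf{SNR})}\ge \beta_{\rm sd}+\frac{[\beta_{\rm rd}-\beta_{\rm sd}]^+[\beta_{\rm sr}-\beta_{\rm sd}]^+}{[\beta_{\rm rd}-\beta_{\rm sd}]^++[\beta_{\rm sr}-\beta_{\rm sd}]^+}$$ (with the fraction interpreted as $0$ when its denominator vanishes), i.e. the LDA rate achieves the gDoF upper bound of the G-HD-RC.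
   Context: $r^{\rm(LDA\text{-}HD)}:=\log(1+S)+\frac{\log(1+\frac{I}{1+S})\,D}{\log(1+\frac{I}{1+S})+D}$ with $D:=[\log(1+\frac{C}{1+S})-\log(1+\frac{S}{1+S})]^+$, an achievable rate of the Gaussian half-duplex relay channel $Y_r=\sqrt{C}X_s(1-S_r)+Z_r$, $Y_d=\sqrt S X_s+e^{j\theta}\sqrt I X_rS_r+Z_d$ (unit-power inputs, unit-variance independent complex Gaussian noises, relay state $S_r\in\{0,1\}$ with $0$ = listen, $1$ = transmit). $[x]^+=\max\{x,0\}$; logs base 2. *)

From Stdlib Require Import Reals Lra.
Open Scope R_scope.

Definition log2 (x : R) : R := ln x / ln 2.

Definition pos_part (x : R) : R := Rmax x 0.

Definition D_LDA (S C : R) : R :=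
  pos_part (log2 (1 + C / (1 + S)) - log2 (1 + S / (1 + S))).

Definition r_LDA_HD (S I C : R) : R :=
  log2 (1 + S)
  + (log2 (1 + I / (1 + S)) * D_LDA S C) / (log2 (1 + I / (1 + S)) + D_LDA S C).

Definition frac0 (a b : R) : R :=
  if Req_EM_T (a + b) 0 then 0 else a * b / (a + b).

Definition gdof_bound (bsd brd bsr : R) : R :=
  bsd + frac0 (pos_part (brd - bsd)) (pos_part (bsr - bsd)).

Definition liminf_ge_at_infty (f : R -> R) (L : R) : Prop :=
  forall eps : R, 0 < eps -> exists M : R, forall x : R, M < x -> L - eps <= f x.

(* Write L := log2 SNR, so that S = SNR^bsd, I = SNR^brd and C = SNR^bsr
   have base-2 logarithms bsd*L, brd*L and bsr*L.  Up to additive constants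
   each logarithm appearing in the rate is linear in L:
     log2 (1 + S)            >= bsd * L,
     a := log2 (1 + I/(1+S)) >= [brd - bsd]^+ * L - 2,
     D                       >= [bsr - bsd]^+ * L - 2.
   The rate combines a and D through the "parallel sum" par a D = a D/(a+D),
   which is monotone in both arguments; a short computation shows that
   par (p L - 2) (q L - 2) >= par p q * L - 2 once p L, q L > 2.  Hence
   r >= G * L - 2 with G the gDoF bound, while log2 (1 + SNR) <= L + 1, and
   the ratio exceeds G - eps as soon as eps * L >= 2 + G. *)

From Stdlib Require Import Reals Lra.
Open Scope R_scope.

Lemma Rdiv_le_cross (u v w z : R) :
  0 < v -> 0 < z -> u * z <= w * v -> u / v <= w / z.
Proof.
  intros Hv Hz H.
  apply (Rmult_le_reg_r (v * z)); [nra |].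
  replace (u / v * (v * z)) with (u * z) by (field; lra).
  replace (w / z * (v * z)) with (w * v) by (field; lra).
  exact H.
Qed.

(* A quotient of nonnegative reals is nonnegative (also when dividing by 0). *)
Lemma Rdiv_nonneg (k p : R) : 0 <= k -> 0 <= p -> 0 <= k / p.
Proof.
  intros Hk Hp. destruct (Req_dec p 0) as [-> | Hp0].
  - rewrite Rdiv_0_r; lra.
  - unfold Rdiv. apply Rmult_le_pos; [lra |].
    left; apply Rinv_0_lt_compat; lra.
Qed.

Lemma ln2_pos : 0 < ln 2.
Proof. rewrite <- ln_1. apply ln_increasing; lra. Qed.

Lemma log2_lt (x y : R) : 0 < x -> x < y -> log2 x < log2 y.
Proof.
  intros Hx Hxy. unfold log2.
  apply Rmult_lt_compat_r.
  - apply Rinv_0_lt_compat, ln2_pos.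
  - apply ln_increasing; lra.
Qed.

Lemma log2_le (x y : R) : 0 < x -> x <= y -> log2 x <= log2 y.
Proof.
  intros Hx [Hxy | ->]; [left; apply log2_lt |]; lra.
Qed.

Lemma log2_mult (x y : R) : 0 < x -> 0 < y -> log2 (x * y) = log2 x + log2 y.
Proof.
  intros Hx Hy. unfold log2. rewrite ln_mult by lra.
  field. pose proof ln2_pos; lra.
Qed.

Lemma log2_2 : log2 2 = 1.
Proof. unfold log2. field. pose proof ln2_pos; lra. Qed.

Lemma log2_Rpower (s b : R) : 0 < s -> log2 (Rpower s b) = b * log2 s.
Proof. intros Hs. unfold log2. rewrite ln_Rpower. unfold Rdiv. ring. Qed.

Lemma log2_1 : log2 1 = 0.
Proof. unfold log2. rewrite ln_1. apply Rdiv_0_l. Qed.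

Lemma log2_nonneg (x : R) : 1 <= x -> 0 <= log2 x.
Proof. intros Hx. rewrite <- log2_1. apply log2_le; lra. Qed.

Lemma log2_eventually_gt (B : R) :
  0 <= B -> exists M, forall x, M < x -> 1 < x /\ B < log2 x.
Proof.
  intros HB. exists (Rpower 2 B). intros x Hx.
  assert (HM1 : 1 <= Rpower 2 B).
  { rewrite <- (Rpower_O 2) by lra. apply Rle_Rpower; lra. }
  split; [lra |].
  assert (HlogM : log2 (Rpower 2 B) = B).
  { rewrite log2_Rpower, log2_2 by lra. ring. }
  rewrite <- HlogM. apply log2_lt; [unfold Rpower; apply exp_pos | exact Hx].
Qed.

Lemma log2_1p_le (x : R) : 1 <= x -> log2 (1 + x) <= log2 x + 1.
Proof.
  intros Hx.
  assert (Hdouble : log2 (2 * x) = log2 x + 1).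
  { rewrite log2_mult, log2_2 by lra. ring. }
  rewrite <- Hdouble. apply log2_le; lra.
Qed.

Lemma log2_excess_lower (S X : R) :
  1 <= S -> 0 < X -> log2 X - log2 S - 1 <= log2 (1 + X / (1 + S)).
Proof.
  intros HS HX.
  assert (Hsplit : log2 X = log2 (X / (2 * S)) + log2 2 + log2 S).
  { assert (0 < X / (2 * S)) by (apply Rdiv_lt_0_compat; lra).
    rewrite <- !log2_mult by nra. f_equal. field. lra. }
  rewrite Hsplit, log2_2.
  enough (log2 (X / (2 * S)) <= log2 (1 + X / (1 + S))) by lra.
  assert (HXS : X / (2 * S) <= X / (1 + S)) by (apply Rdiv_le_cross; nra).
  assert (0 < X / (1 + S)) by (apply Rdiv_lt_0_compat; lra).
  apply log2_le; [apply Rdiv_lt_0_compat |]; lra.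
Qed.

Lemma log2_self_share_le1 (S : R) : 0 <= S -> log2 (1 + S / (1 + S)) <= 1.
Proof.
  intros HS.
  assert (0 <= S / (1 + S)) by (apply Rdiv_nonneg; lra).
  assert (S / (1 + S) <= 1 / 1) by (apply Rdiv_le_cross; lra).
  apply Rle_trans with (log2 2); [apply log2_le; lra | rewrite log2_2; lra].
Qed.

Lemma pos_part_lower (c L y : R) :
  0 <= L -> 0 <= y -> c * L - 2 <= y -> pos_part c * L - 2 <= y.
Proof.
  intros HL Hy H. unfold pos_part.
  destruct (Rle_or_lt 0 c).
  - rewrite Rmax_left by lra. exact H.
  - rewrite Rmax_right by lra. lra.
Qed.

(* The parallel sum a*b/(a+b) (half the harmonic mean), which combines the
   two relay hops in the LDA rate. *)
Definition par (a b : R) : R := a * b / (a + b).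

Lemma par_nonneg (a b : R) : 0 <= a -> 0 <= b -> 0 <= par a b.
Proof.
  intros Ha Hb. unfold par. apply Rdiv_nonneg; nra.
Qed.

Lemma par_mono (x y a d : R) :
  0 <= x -> 0 <= y -> x <= a -> y <= d -> par x y <= par a d.
Proof.
  intros Hx Hy Ha Hd.
  destruct (Req_dec (x + y) 0) as [Hxy | Hxy].
  - replace (par x y) with 0.
    + apply par_nonneg; lra.
    + unfold par. rewrite Hxy, Rdiv_0_r. reflexivity.
  - unfold par. apply Rdiv_le_cross; try lra.
    assert (Hid : a * d * (x + y) - x * y * (a + d)
                  = a * x * (d - y) + d * y * (a - x)) by ring.
    assert (0 <= a * x * (d - y)) by (apply Rmult_le_pos; nra).
    assert (0 <= d * y * (a - x)) by (apply Rmult_le_pos; nra).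
    lra.
Qed.

Lemma par_affine_lower (p q L : R) :
  0 < p -> 0 < q -> 2 < p * L -> 2 < q * L ->
  par p q * L - 2 <= par (p * L - 2) (q * L - 2).
Proof.
  intros Hp Hq HpL HqL. unfold par.
  replace (p * q / (p + q) * L - 2) with ((p * q * L - 2 * (p + q)) / (p + q))
    by (field; lra).
  apply Rdiv_le_cross; [lra | lra |].
  assert (Hid : (p * L - 2) * (q * L - 2) * (p + q)
                - (p * q * L - 2 * (p + q)) * (p * L - 2 + (q * L - 2))
                = 2 * (p * (q * L - 2) + q * (p * L - 2))) by ring.
  nra.
Qed.

Lemma frac0_nonneg (p q : R) : 0 <= p -> 0 <= q -> 0 <= frac0 p q.
Proof.
  intros Hp Hq. unfold frac0. destruct (Req_EM_T (p + q) 0); [lra |].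
  apply (par_nonneg p q Hp Hq).
Qed.

Lemma gdof_bound_nonneg (bsd brd bsr : R) : 0 <= bsd -> 0 <= gdof_bound bsd brd bsr.
Proof.
  intros Hsd. unfold gdof_bound.
  pose proof (frac0_nonneg _ _ (Rmax_r (brd - bsd) 0) (Rmax_r (bsr - bsd) 0)).
  unfold pos_part. lra.
Qed.

Lemma frac0_lower (p q L a d : R) :
  0 <= p -> 0 <= q -> (p = 0 \/ 2 < p * L) -> (q = 0 \/ 2 < q * L) ->
  0 <= a -> 0 <= d -> p * L - 2 <= a -> q * L - 2 <= d ->
  frac0 p q * L - 2 <= par a d.
Proof.
  intros Hp Hq HpL HqL Ha Hd HaL HdL.
  pose proof (par_nonneg a d Ha Hd) as Hpar.
  unfold frac0. destruct (Req_EM_T (p + q) 0) as [Hpq | Hpq]; [lra |].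
  destruct HpL as [-> | HpL]; [rewrite Rmult_0_l, Rdiv_0_l; lra |].
  destruct HqL as [-> | HqL]; [rewrite Rmult_0_r, Rdiv_0_l; lra |].
  apply Rle_trans with (par (p * L - 2) (q * L - 2)).
  - apply (par_affine_lower p q L); nra.
  - apply par_mono; lra.
Qed.

Lemma ratio_lower (G eps L num den : R) :
  0 <= G -> 0 < eps -> 0 < den -> den <= L + 1 -> 0 <= num ->
  G * L - 2 <= num -> 2 + G <= eps * L -> G - eps <= num / den.
Proof.
  intros HG Heps Hden HdenL Hnum HnumL HL.
  assert (0 <= num / den) by (apply Rdiv_nonneg; lra).
  destruct (Rle_or_lt (G - eps) 0); [lra |].
  apply (Rmult_le_reg_r den); [lra |].
  replace (num / den * den) with num by (field; lra).
  assert ((G - eps) * den <= (G - eps) * (L + 1)) by (apply Rmult_le_compat_l; lra).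
  lra.
Qed.

Lemma slope_threshold (p L : R) : 0 <= p -> 2 / p < L -> p = 0 \/ 2 < p * L.
Proof.
  intros Hp HL. destruct (Req_dec p 0) as [Hp0 | Hp0]; [left; exact Hp0 | right].
  replace 2 with (p * (2 / p)) at 1 by (field; lra).
  apply Rmult_lt_compat_l; lra.
Qed.

Section HighSNR.

Variables snr bsd brd bsr : R.
Hypothesis Hsnr : 1 < snr.
Hypothesis Hsd : 0 <= bsd.

Lemma log2_snr_pos : 0 < log2 snr.
Proof. rewrite <- log2_1. apply log2_lt; lra. Qed.

Lemma direct_power_ge1 : 1 <= Rpower snr bsd.
Proof. rewrite <- (Rpower_O snr) by lra. apply Rle_Rpower; lra. Qed.

Lemma direct_link_lower : bsd * log2 snr <= log2 (1 + Rpower snr bsd).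
Proof.
  rewrite <- log2_Rpower by lra.
  apply log2_le; [unfold Rpower; apply exp_pos | lra].
Qed.

Lemma power_over_direct_lower (b : R) :
  (b - bsd) * log2 snr - 1 <= log2 (1 + Rpower snr b / (1 + Rpower snr bsd)).
Proof.
  pose proof (log2_excess_lower (Rpower snr bsd) (Rpower snr b)
                direct_power_ge1 ltac:(unfold Rpower; apply exp_pos)) as H.
  rewrite !log2_Rpower in H by lra. lra.
Qed.

Lemma power_over_direct_nonneg (b : R) :
  0 <= log2 (1 + Rpower snr b / (1 + Rpower snr bsd)).
Proof.
  apply log2_nonneg.
  assert (0 <= Rpower snr b / (1 + Rpower snr bsd)).
  { pose proof direct_power_ge1.
    apply Rdiv_nonneg; [unfold Rpower; left; apply exp_pos | lra]. }
  lra.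
Qed.

Lemma relay_link_lower :
  pos_part (brd - bsd) * log2 snr - 2
  <= log2 (1 + Rpower snr brd / (1 + Rpower snr bsd)).
Proof.
  pose proof log2_snr_pos. pose proof (power_over_direct_lower brd).
  apply pos_part_lower; [lra | apply power_over_direct_nonneg | lra].
Qed.

Lemma relay_gain_lower :
  pos_part (bsr - bsd) * log2 snr - 2 <= D_LDA (Rpower snr bsd) (Rpower snr bsr).
Proof.
  pose proof log2_snr_pos. pose proof (power_over_direct_lower bsr).
  pose proof direct_power_ge1.
  pose proof (log2_self_share_le1 (Rpower snr bsd) ltac:(lra)).
  unfold D_LDA. apply pos_part_lower; [lra | apply Rmax_r |].
  eapply Rle_trans; [| apply Rmax_l]. lra.
Qed.

Lemma rate_lower :
  (pos_part (brd - bsd) = 0 \/ 2 < pos_part (brd - bsd) * log2 snr) ->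
  (pos_part (bsr - bsd) = 0 \/ 2 < pos_part (bsr - bsd) * log2 snr) ->
  gdof_bound bsd brd bsr * log2 snr - 2
  <= r_LDA_HD (Rpower snr bsd) (Rpower snr brd) (Rpower snr bsr).
Proof.
  intros Hp Hq.
  pose proof direct_link_lower.
  assert (Hpar := frac0_lower (pos_part (brd - bsd)) (pos_part (bsr - bsd))
                    (log2 snr)
                    (log2 (1 + Rpower snr brd / (1 + Rpower snr bsd)))
                    (D_LDA (Rpower snr bsd) (Rpower snr bsr))
                    (Rmax_r _ _) (Rmax_r _ _) Hp Hq
                    (power_over_direct_nonneg brd) (Rmax_r _ _)
                    relay_link_lower relay_gain_lower).
  unfold gdof_bound, r_LDA_HD. fold (par (log2 (1 + Rpower snr brd / (1 + Rpower snr bsd)))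
                                      (D_LDA (Rpower snr bsd) (Rpower snr bsr))).
  lra.
Qed.

Lemma rate_nonneg : 0 <= r_LDA_HD (Rpower snr bsd) (Rpower snr brd) (Rpower snr bsr).
Proof.
  pose proof direct_link_lower. pose proof log2_snr_pos.
  assert (0 <= par (log2 (1 + Rpower snr brd / (1 + Rpower snr bsd)))
                   (D_LDA (Rpower snr bsd) (Rpower snr bsr))).
  { apply par_nonneg; [apply power_over_direct_nonneg | apply Rmax_r]. }
  unfold r_LDA_HD, par in *. nra.
Qed.

End HighSNR.

Theorem proposition6 (bsd brd bsr : R)
  (hsd : 0 <= bsd) (hrd : 0 < brd) (hsr : 0 <= bsr) :
  liminf_ge_at_infty
    (fun snr => r_LDA_HD (Rpower snr bsd) (Rpower snr brd) (Rpower snr bsr)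
                / log2 (1 + snr))
    (gdof_bound bsd brd bsr).
Proof.
  intros eps Heps.
  set (p := pos_part (brd - bsd)). set (q := pos_part (bsr - bsd)).
  set (G := gdof_bound bsd brd bsr).
  assert (Hp : 0 <= p) by apply Rmax_r. assert (Hq : 0 <= q) by apply Rmax_r.
  assert (HG : 0 <= G) by (apply gdof_bound_nonneg; exact hsd).
  pose proof (Rdiv_nonneg 2 p ltac:(lra) Hp).
  pose proof (Rdiv_nonneg 2 q ltac:(lra) Hq).
  pose proof (Rdiv_nonneg (2 + G) eps ltac:(lra) ltac:(lra)).
  destruct (log2_eventually_gt (2 / p + 2 / q + (2 + G) / eps)) as [M HM]; [lra |].
  exists M. intros snr Hx. destruct (HM snr Hx) as [Hsnr HL].
  assert (HepsL : 2 + G <= eps * log2 snr).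
  { replace (2 + G) with (eps * ((2 + G) / eps)) by (field; lra).
    apply Rmult_le_compat_l; lra. }
  apply (ratio_lower G eps (log2 snr)); try assumption.
  - apply log2_snr_pos; lra.
  - apply log2_1p_le; lra.
  - apply rate_nonneg; assumption.
  - apply (rate_lower snr bsd brd bsr Hsnr hsd); [apply (slope_threshold p) | apply (slope_threshold q)]; lra.
Qed.
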